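(* Let $M\geq 1$ and let $r$ be a DSIC mechanism in the bilateral cooperation model described in the context, with competitive ratio $\alpha$. For $d\in\{1,\dots,M\}$ let $B_*^d$ be the set of submodular vectors $b\in\mathbb{R}^M$ with $b_1\geq\cdots\geq b_d>0\geq b_{d+1}\geq\cdots\geq b_M$. Let $s^*\in\mathbb{R}^M$ be given by $s^*_i=i$ for all $i$. Then for every $d\in\{1,\dots,M\}$ and every $b\in B_*^d$: $$\sum_{i=1}^d r_i(b,s^* )\, b_i\ \geq\ \alpha\cdot\sum_{i=1}^d \frac{b_i}{i}.$$
   Context: Bilateral cooperation model: there are two agents, a buyer and a seller, and options $0,1,\dots,M$. A buyer utility vector is $b=(b_1,\dots,b_M)\in\mathbb{R}^M$ and a seller utility vector is $s=(s_1,\dots,s_M)\in\mathbb{R}^M$; by convention $b_0=s_0=0$. A vector $v=(v_1,\dots,v_M)$ (with $v_0=0$) is submodular if $v_{i+1}-v_i\leq v_i-v_{i-1}$ for every $i\in\{1,\dots,M-1\}$. Define $\mathrm{Feasible}(b,s)=\{i\in\{0,\dots,M\}: b_i\geq 0 \text{ and } s_i\geq 0\}$ and $OPT(b,s)=\max_{i\in \mathrm{Feasible}(b,s)}(b_i+s_i)$. A mechanism is a function $r$ mapping each pair of reported vectors $(b',s')$ to a probability vector $(r_0(b',s'),\dots,r_M(b',s'))$. The mechanism $r$ is DSIC if for all $b,b',s,s'$: $\sum_{i=1}^M r_i(b,s')\,b_i\geq \sum_{i=1}^M r_i(b',s')\,b_i$ and $\sum_{i=1}^M r_i(b',s)\,s_i\geq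 \sum_{i=1}^M r_i(b',s')\,s_i$. The gain at true vectors $(b,s)$ is $G_r(b,s)=\sum_{i=1}^M r_i(b,s)(b_i+s_i)$, and the competitive ratio is $C_r=\min_{b,s} G_r(b,s)/OPT(b,s)$; ''competitive ratio $\alpha$'' means $C_r=\alpha$. *)

From mathcomp Require Import all_boot all_order all_algebra.
Set Implicit Arguments. Unset Strict Implicit. Unset Printing Implicit Defensive.
Import Order.TTheory GRing.Theory Num.Theory.
Local Open Scope ring_scope.

(* A utility vector (v_1,...,v_M): coordinate i : 'I_M stores v_(i+1). *)
Definition vec (R : realFieldType) (M : nat) := {ffun 'I_M -> R}.

(* 1-based access with the convention v_0 = 0 (and 0 beyond M). *)
Definition vn (R : realFieldType) (M : nat) (v : vec R M) (n : nat) : R :=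
  match n with
  | 0 => 0
  | k.+1 => if @insub _ (fun x => (x < M)%N) 'I_M k is Some i then v i else 0
  end.

Definition mechanism (R : realFieldType) (M : nat) :=
  vec R M -> vec R M -> 'I_M.+1 -> R.

Definition rn (R : realFieldType) (M : nat) (r : mechanism R M)
  (b s : vec R M) (n : nat) : R := r b s (inord n).

Definition is_prob_mechanism (R : realFieldType) (M : nat) (r : mechanism R M) :=
  forall b s, (forall j, 0 <= r b s j) /\ \sum_(j < M.+1) r b s j = 1.

Definition submodular (R : realFieldType) (M : nat) (v : vec R M) :=
  forall i : nat, (1 <= i)%N -> (i <= M.-1)%N ->
    vn v i.+1 - vn v i <= vn v i - vn v i.-1.

Definition DSIC (R : realFieldType) (M : nat) (r : mechanism R M) :=
  forall b b' s s' : vec R M,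
    \sum_(1 <= i < M.+1) rn r b s' i * vn b i
      >= \sum_(1 <= i < M.+1) rn r b' s' i * vn b i
  /\ \sum_(1 <= i < M.+1) rn r b' s i * vn s i
      >= \sum_(1 <= i < M.+1) rn r b' s' i * vn s i.

(* OPT(b,s) = max over feasible options i in {0..M} of b_i + s_i
   (option 0 is always feasible with value 0). *)
Definition OPT (R : realFieldType) (M : nat) (b s : vec R M) : R :=
  \big[Num.max/0]_(0 <= i < M.+1 | (0 <= vn b i) && (0 <= vn s i))
     (vn b i + vn s i).

Definition gain (R : realFieldType) (M : nat) (r : mechanism R M) (b s : vec R M) : R :=
  \sum_(1 <= i < M.+1) rn r b s i * (vn b i + vn s i).

Definition competitive_ratio (R : realFieldType) (M : nat) (r : mechanism R M) (alpha : R) :=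
  (forall b s : vec R M, 0 < OPT b s -> alpha <= gain r b s / OPT b s) /\
  (forall beta : R,
     (forall b s : vec R M, 0 < OPT b s -> beta <= gain r b s / OPT b s) ->
     beta <= alpha).

Definition Bstar (R : realFieldType) (M : nat) (d : nat) (b : vec R M) :=
  [/\ submodular b,
      (forall i : nat, (1 <= i)%N -> (i < d)%N -> vn b i.+1 <= vn b i),
      0 < vn b d,
      (d < M)%N -> vn b d.+1 <= 0 &
      (forall i : nat, (d < i)%N -> (i < M)%N -> vn b i.+1 <= vn b i)].

Definition sstar (R : realFieldType) (M : nat) : vec R M :=
  [ffun i : 'I_M => (i.+1)%:R].

From mathcomp Require Import all_boot all_order all_algebra.
From mathcomp Require Import ring lra.

(* Let U(x) = sum_i r_i(x, s* ) x_i be the utility of a buyer reporting x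
   truthfully against s*, and E(x) = sum_i r_i(x, s* ) i.  Buyer DSIC gives
   U(x + delta s* ) >= U(x) + delta E(x).  If x_k = 0, then against the seller
   report s = s* - x every option i is worth exactly i to the pair and option
   k is feasible, so the gain alpha k is a lower bound, and seller DSIC bounds
   that gain by E(x): E(x) >= alpha k.  By submodularity the ratios
   tau_k = b_k / k decrease, so walking from b - tau_1 s* through the points
   b - tau_k s* (which vanish at option k) down to b, and summing by parts,
   gives U(b) >= U(b - tau_1 s* ) + alpha sum_(k <= d) b_k / k.  The first
   term is nonnegative because that vector vanishes at option 1, and the
   options beyond d only lower U(b) below the left-hand side. *)
Set Implicit Arguments. Unset Strict Implicit. Unset Printing Implicit Defensive.
Import Order.TTheory GRing.Theory Num.Theory.
Local Open Scope ring_scope.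

Definition mkvec (R : realFieldType) (M : nat) (f : nat -> R) : vec R M :=
  [ffun i : 'I_M => f i.+1].

Lemma vn_ord (R : realFieldType) (M : nat) (v : vec R M) (i : 'I_M) :
  vn v i.+1 = v i.
Proof. by rewrite /= insubT //= => ?; congr (v _); apply: val_inj. Qed.

Lemma vn_mkvec (R : realFieldType) (M : nat) (f : nat -> R) n :
  (0 < n <= M)%N -> vn (mkvec M f) n = f n.
Proof.
case: n => [//|n] /andP[_ lt_nM].
by rewrite -[n]/(val (Ordinal lt_nM)) vn_ord ffunE.
Qed.

Lemma mkvec_vn (R : realFieldType) (M : nat) (f : nat -> R) (v : vec R M) :
  (forall n, (0 < n <= M)%N -> f n = vn v n) -> mkvec M f = v.
Proof. by move=> fv; apply/ffunP => i; rewrite ffunE fv ?vn_ord ?ltn_ord. Qed.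

Lemma vn_sstar (R : realFieldType) (M : nat) n :
  (0 < n <= M)%N -> vn (sstar R M) n = n%:R.
Proof. exact: (@vn_mkvec R M (fun n => n%:R)). Qed.

Lemma le_OPT (R : realFieldType) (M : nat) (b s : vec R M) k :
  (k <= M)%N -> 0 <= vn b k -> 0 <= vn s k -> vn b k + vn s k <= OPT b s.
Proof.
move=> le_kM b_ge0 s_ge0; apply: (@le_bigmax_seq _ _ _ _ 0 k).
  by rewrite mem_index_iota ltnS.
by rewrite b_ge0 s_ge0.
Qed.

Lemma sumr_by_parts (R : comPzRingType) (f : nat -> R) n :
  \sum_(1 <= k < n.+1) k%:R * (f k - f k.+1)
    = \sum_(1 <= k < n.+1) f k - n%:R * f n.+1.
Proof.
elim: n => [|n IHn]; first by rewrite !big_geq // mul0r subr0.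
by rewrite big_nat_recr //= IHn [in RHS]big_nat_recr //= -natr1; ring.
Qed.

Lemma submodular_increment_le (R : realFieldType) (M : nat) (b : vec R M) k :
  submodular b -> (k < M)%N -> k%:R * (vn b k.+1 - vn b k) <= vn b k.
Proof.
move=> b_sub; elim: k => [|k IHk] lt_kM; first by rewrite mul0r.
have concave : vn b k.+2 - vn b k.+1 <= vn b k.+1 - vn b k.
  by apply: b_sub => //; rewrite -ltnS prednK ?(leq_ltn_trans _ lt_kM).
have := IHk (ltnW lt_kM); have := ler_wpM2l (ler0n R k.+1) concave.
rewrite -natr1; nra.
Qed.

Lemma submodular_ratio_antitone (R : realFieldType) (M : nat) (b : vec R M) i j :
  submodular b -> (0 < i <= j)%N -> (j <= M)%N ->
  vn b j / j%:R <= vn b i / i%:R.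
Proof.
move=> b_sub /andP[i_gt0 le_ij].
elim: j le_ij => [|j IHj]; first by rewrite leqn0 => /eqP->.
rewrite leq_eqVlt => /orP[/eqP<- //|lt_ij] lt_jM.
apply: le_trans (IHj lt_ij (ltnW lt_jM)).
have j_gt0 : (0 < j)%N := leq_trans i_gt0 lt_ij.
rewrite ler_pdivrMr ?ltr0n // mulrAC ler_pdivlMr ?ltr0n // -natr1.
have := submodular_increment_le b_sub lt_jM; lra.
Qed.

Lemma submodular_gt0_prefix (R : realFieldType) (M : nat) (b : vec R M) j k :
  submodular b -> 0 < vn b j -> (0 < k <= j)%N -> (j <= M)%N -> 0 < vn b k.
Proof.
move=> b_sub bj_gt0 k_in le_jM; have /andP[k_gt0 le_kj] := k_in.
have j_gt0 : (0 < j)%N := leq_trans k_gt0 le_kj.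
rewrite -(pmulr_lgt0 _ (_ : 0 < k%:R^-1)) ?invr_gt0 ?ltr0n //.
apply: lt_le_trans (submodular_ratio_antitone b_sub k_in le_jM).
by rewrite divr_gt0 ?ltr0n.
Qed.

Lemma submodular_le0_suffix (R : realFieldType) (M : nat) (b : vec R M) j k :
  submodular b -> vn b j <= 0 -> (0 < j <= k)%N -> (k <= M)%N -> vn b k <= 0.
Proof.
move=> b_sub bj_le0 j_in le_kM; have /andP[j_gt0 le_jk] := j_in.
have k_gt0 : (0 < k)%N := leq_trans j_gt0 le_jk.
rewrite -(pmulr_lle0 _ (_ : 0 < k%:R^-1)) ?invr_gt0 ?ltr0n //.
apply: le_trans (submodular_ratio_antitone b_sub j_in le_kM) _.
by rewrite pmulr_lle0 ?invr_gt0 ?ltr0n.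
Qed.

Lemma competitive_ratio_le_gain (R : realFieldType) (M : nat) (r : mechanism R M) alpha
    (b s : vec R M) :
  competitive_ratio r alpha -> 0 < OPT b s -> alpha * OPT b s <= gain r b s.
Proof. by move=> [lb _] OPT_gt0; rewrite -ler_pdivlMr //; exact: lb. Qed.

Section Mechanism.

Variables (R : realFieldType) (M : nat) (r : mechanism R M).
Hypothesis r_prob : is_prob_mechanism r.

Definition expect (x s : vec R M) (f : nat -> R) : R :=
  \sum_(1 <= i < M.+1) rn r x s i * f i.

Definition utility (x : vec R M) : R := expect x (sstar R M) (vn x).

Lemma rn_ge0 x s i : 0 <= rn r x s i.
Proof. by case: (r_prob x s) => r_ge0 _; exact: r_ge0. Qed.

Lemma expect_eq x s f g :
  (forall n, (0 < n <= M)%N -> f n = g n) -> expect x s f = expect x s g.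
Proof. by move=> fg; apply: eq_big_nat => n /andP[n_gt0 lt_nM]; rewrite fg ?n_gt0. Qed.

Lemma expect_le x s f g :
  (forall n, (0 < n <= M)%N -> f n <= g n) -> expect x s f <= expect x s g.
Proof.
move=> fg; apply: ler_sum_nat => n /andP[n_gt0 lt_nM].
by rewrite ler_wpM2l ?rn_ge0 ?fg ?n_gt0.
Qed.

Lemma expectD x s f g :
  expect x s (fun n => f n + g n) = expect x s f + expect x s g.
Proof. by rewrite -big_split; apply: eq_bigr => n _; rewrite mulrDr. Qed.

Lemma expectZ x s a f : expect x s (fun n => a * f n) = a * expect x s f.
Proof. by rewrite mulr_sumr; apply: eq_bigr => n _; rewrite mulrCA. Qed.

Lemma expect1_le1 x s : expect x s (fun=> 1) <= 1.
Proof.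
case: (r_prob x s) => _ sum_r1.
have split0 : \sum_(j < M.+1) r x s j = rn r x s 0%N + expect x s (fun=> 1).
  rewrite big_ord_recl /expect big_add1 big_mkord; congr (r _ _ _ + _).
    by apply: val_inj; rewrite /= inordK.
  apply: eq_bigr => i _; rewrite mulr1 /rn; apply: congr1; apply: val_inj.
  by rewrite /= /bump leq0n add1n inordK // ltnS ltn_ord.
have := rn_ge0 x s 0%N; lra.
Qed.

Lemma utility_le_prefix (b : vec R M) d :
  (d <= M)%N -> (forall i, (d < i <= M)%N -> vn b i <= 0) ->
  utility b <= \sum_(1 <= i < d.+1) rn r b (sstar R M) i * vn b i.
Proof.
move=> le_dM b_le0; rewrite /utility /expect (@big_cat_nat _ _ _ d.+1) //= ?ltnS //.
rewrite gerDl big_nat_cond; apply: sumr_le0 => i /andP[/andP[lt_di lt_iM] _].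
by rewrite mulr_ge0_le0 ?rn_ge0 ?b_le0 // lt_di -ltnS.
Qed.

Section Incentives.

Hypothesis r_DSIC : DSIC r.

Lemma utility_shift (x y : vec R M) delta :
  (forall n, (0 < n <= M)%N -> vn y n = vn x n + delta * n%:R) ->
  utility x + delta * expect x (sstar R M) (fun n => n%:R) <= utility y.
Proof.
move=> yx; apply: le_trans (r_DSIC y x (sstar R M) (sstar R M)).1.
rewrite -expectZ -expectD (@expect_eq _ _ _ (vn y)) ?lexx // => n n_in.
by rewrite yx.
Qed.

Variable alpha : R.
Hypothesis alpha_ge0 : 0 <= alpha.
Hypothesis alpha_le_ratio :
  forall b s : vec R M, 0 < OPT b s -> alpha * OPT b s <= gain r b s.

Lemma expect_index_ge x k : (0 < k <= M)%N -> vn x k = 0 ->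
  alpha * k%:R <= expect x (sstar R M) (fun n => n%:R).
Proof.
move=> k_in xk0; have /andP[k_gt0 le_kM] := k_in.
pose s := mkvec M (fun n => n%:R - vn x n).
have k_le_OPT : k%:R <= OPT x s.
  have := @le_OPT R M x s k le_kM; rewrite /s vn_mkvec // xk0 subr0 add0r; apply => //.
have gain_s : gain r x s = expect x s (vn (sstar R M)).
  by apply: expect_eq => n hn; rewrite /s vn_mkvec // vn_sstar // addrC subrK.
have seller_IC : expect x s (vn (sstar R M)) <= expect x (sstar R M) (vn (sstar R M)).
  exact: (r_DSIC x x (sstar R M) s).2.
rewrite (expect_eq _ _ (fun n hn => esym (vn_sstar R hn))).
apply: le_trans seller_IC; rewrite -gain_s; apply: le_trans (alpha_le_ratio _).
  exact: ler_wpM2l.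
by apply: lt_le_trans k_le_OPT; rewrite ltr0n.
Qed.

(* Against the report x = (0, -L, ..., -L) with L large, a positive gain forces
   the mechanism to put almost all its weight on options 0 and 1, where c
   is worth nothing. *)
Lemma utility_ge0 (c : vec R M) : (0 < M)%N -> vn c 1 = 0 -> 0 <= utility c.
Proof.
move=> M_gt0 c1_0; apply/ler_addgt0Pr => e e_gt0; rewrite -lerBlDr sub0r.
pose K := \sum_(1 <= i < M.+1) `|vn c i|.
have K_ge i : (0 < i <= M)%N -> `|vn c i| <= K.
  move=> /andP[i_gt0 le_iM]; rewrite /K (bigD1_seq i) ?iota_uniq //=; last first.
    by rewrite mem_index_iota i_gt0 ltnS.
  by rewrite lerDl sumr_ge0.
pose x := mkvec M (fun n => if n == 1%N then 0 else - (M%:R + K / e)).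
have OPT_ge1 : 1 <= OPT x (sstar R M).
  have := @le_OPT R M x (sstar R M) 1 M_gt0.
  by rewrite /x vn_mkvec ?M_gt0 // vn_sstar ?M_gt0 // add0r; apply.
have gain_ge0 : 0 <= gain r x (sstar R M).
  have OPT_gt0 := lt_le_trans ltr01 OPT_ge1.
  exact: le_trans (mulr_ge0 alpha_ge0 (ltW OPT_gt0)) (alpha_le_ratio OPT_gt0).
have c_ge n : (0 < n <= M)%N ->
    e * (vn x n + vn (sstar R M) n) + - e * 1 <= vn c n.
  move=> n_in; rewrite /x vn_mkvec // vn_sstar //.
  case: eqP => [->|_]; first by rewrite c1_0 add0r !mulr1 addrN.
  have := K_ge n n_in; rewrite ler_norml => /andP[cn_ge _].
  have n_le : n%:R <= M%:R :> R by rewrite ler_nat; case/andP: n_in.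
  have -> : e * (- (M%:R + K / e) + n%:R) = e * (n%:R - M%:R) - K.
    by field; rewrite gt_eqF.
  have := ler_wpM2l (ltW e_gt0) n_le; lra.
have buyer_IC : expect x (sstar R M) (vn c) <= utility c.
  exact: (r_DSIC c x (sstar R M) (sstar R M)).1.
apply: le_trans buyer_IC.
apply: le_trans (@expect_le x (sstar R M)
  (fun n => e * (vn x n + vn (sstar R M) n) + - e * 1) (vn c) c_ge).
rewrite expectD !expectZ.
change (expect x (sstar R M) (fun n => vn x n + vn (sstar R M) n))
  with (gain r x (sstar R M)).
have := ler_wpM2l (ltW e_gt0) (expect1_le1 x (sstar R M)).
have := mulr_ge0 (ltW e_gt0) gain_ge0; lra.
Qed.

Lemma utility_ge_ratio_sum (b : vec R M) d :
  submodular b -> (0 < d <= M)%N -> 0 <= vn b d ->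
  alpha * \sum_(1 <= k < d.+1) vn b k / k%:R <= utility b.
Proof.
move=> b_sub /andP[d_gt0 le_dM] bd_ge0.
pose tau k := if (k <= d)%N then vn b k / k%:R else 0.
pose c k := mkvec M (fun n => vn b n - tau k * n%:R).
have vn_c k n : (0 < n <= M)%N -> vn (c k) n = vn b n - tau k * n%:R.
  exact: vn_mkvec.
have c_zero k : (0 < k <= d)%N -> vn (c k) k = 0.
  move=> /andP[k_gt0 le_kd]; rewrite vn_c ?k_gt0 ?(leq_trans le_kd) //.
  by rewrite /tau le_kd divfK ?subrr // pnatr_eq0 -lt0n.
have tau_step k : (0 < k <= d)%N -> tau k.+1 <= tau k.
  move=> /andP[k_gt0 le_kd]; rewrite /tau le_kd; case: leqP => [le_dk|lt_kd].
    have -> : k = d by apply/eqP; rewrite eqn_leq le_kd.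
    by rewrite divr_ge0.
  by rewrite submodular_ratio_antitone ?k_gt0 ?leqnSn ?(leq_trans lt_kd).
have step k : (0 < k <= d)%N ->
    alpha * (k%:R * (tau k - tau k.+1)) <= utility (c k.+1) - utility (c k).
  move=> k_in; have /andP[k_gt0 le_kd] := k_in.
  have k_in_M : (0 < k <= M)%N by rewrite k_gt0 (leq_trans le_kd le_dM).
  have shift : utility (c k) + (tau k - tau k.+1) * expect (c k) (sstar R M) (fun n => n%:R)
      <= utility (c k.+1).
    by apply: utility_shift => n n_in; rewrite !vn_c //; ring.
  have E_ge := expect_index_ge k_in_M (c_zero k k_in).
  have delta_ge0 : 0 <= tau k - tau k.+1 by rewrite subr_ge0 tau_step.
  have := ler_wpM2l delta_ge0 E_ge; nra.
have c_last : c d.+1 = b by apply: mkvec_vn => n _; rewrite /tau ltnn mul0r subr0.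
have c_first : 0 <= utility (c 1%N).
  by apply: (utility_ge0 (leq_trans d_gt0 le_dM)); apply: c_zero; rewrite d_gt0.
have sum_tau : \sum_(1 <= k < d.+1) vn b k / k%:R
    = \sum_(1 <= k < d.+1) k%:R * (tau k - tau k.+1).
  rewrite sumr_by_parts {2}/tau ltnn mulr0 subr0.
  by apply: eq_big_nat => k /andP[_ lt_kd]; rewrite /tau -ltnS lt_kd.
rewrite sum_tau mulr_sumr -c_last -[leRHS]subr0.
apply: le_trans (lerB (lexx _) c_first).
rewrite -(@telescope_sumr _ 1 d.+1 (fun k => utility (c k))) //.
by apply: ler_sum_nat => k /andP[k_gt0 lt_kd]; apply: step; rewrite k_gt0 -ltnS.
Qed.

End Incentives.

End Mechanism.

Theorem lemma3 (R : realFieldType) (M : nat) (r : mechanism R M) (alpha : R) :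
  (1 <= M)%N ->
  is_prob_mechanism r ->
  DSIC r ->
  competitive_ratio r alpha ->
  forall (d : nat), (1 <= d)%N -> (d <= M)%N ->
  forall b : vec R M, Bstar d b ->
    \sum_(1 <= i < d.+1) rn r b (sstar R M) i * vn b i
      >= alpha * \sum_(1 <= i < d.+1) vn b i / i%:R.
Proof.
move=> _ r_prob r_DSIC r_ratio d d_gt0 le_dM b [b_sub _ bd_gt0 b_next_le0 _].
have b_gt0 k : (0 < k <= d)%N -> 0 < vn b k.
  by move=> k_in; apply: submodular_gt0_prefix b_sub bd_gt0 k_in le_dM.
have b_le0 i : (d < i <= M)%N -> vn b i <= 0.
  move=> /andP[lt_di le_iM].
  exact: submodular_le0_suffix b_sub (b_next_le0 (leq_trans lt_di le_iM)) lt_di le_iM.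
have utility_le := utility_le_prefix r_prob le_dM b_le0.
have [alpha_le0|alpha_gt0] := lerP alpha 0.
  have sum_ge0 : 0 <= \sum_(1 <= i < d.+1) vn b i / i%:R.
    rewrite big_nat_cond sumr_ge0 // => i /andP[i_in _].
    by rewrite ltnS in i_in; rewrite divr_ge0 ?ler0n ?ltW ?b_gt0.
  have lhs_ge0 : 0 <= \sum_(1 <= i < d.+1) rn r b (sstar R M) i * vn b i.
    rewrite big_nat_cond sumr_ge0 // => i /andP[i_in _].
    by rewrite ltnS in i_in; rewrite mulr_ge0 ?rn_ge0 ?ltW ?b_gt0.
  exact: le_trans (mulr_le0_ge0 alpha_le0 sum_ge0) lhs_ge0.
apply: le_trans utility_le; apply: utility_ge_ratio_sum => //.
- exact: ltW.
- by move=> x s; apply: competitive_ratio_le_gain.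
- by rewrite d_gt0.
- exact: ltW.
Qed.
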